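(* Let $f(x)=x^5+px^4+qx^3+rx^2+sx+t$ with $p,q,r,s,t\in\mathbb{R}$, and let $D$, $L_3$, $L_2$, $L_1$ be as in the context. Then: (1) $f$ has five distinct real roots if and only if $L_3>0$, $L_2>0$, $L_1>0$ and $D>0$; (2) $f$ has three distinct real roots and a pair of (non-real) complex conjugate roots if and only if $D<0$; (3) $f$ has exactly one real root and four distinct non-real roots (two distinct pairs of complex conjugate roots) if and only if $D>0$ and ($L_3\le 0$ or $L_2\le 0$ or $L_1\le 0$).
   Context: Let $\alpha_1,\dots,\alpha_5\in\mathbb{C}$ be the roots of $f$ listed with multiplicity. $D=\prod_{1\le i<j\le 5}(\alpha_i-\alpha_j)^2$ is the discriminant of $f$ (a polynomial in $p,q,r,s,t$). $L_3=2p^2-5q$. $L_2=40qs-16p^2s-8rp^3+38rpq+3p^2q^2-12q^3-45r^2$. $L_1=-264ps^2r-12p^3tq^2+36r^3pq-124srpq^2+28srp^3q+260sptq-132p^2qrt+240pr^2t+234sqr^2+32p^4tr+48ptq^3-56sp^3t-80q^2rt+194qs^2p^2-600str-6q^3sp^2+2p^2q^2r^2-12sr^2p^2-54r^4+320s^3-8q^3r^2-8r^3p^3+250qt^2-176q^2s^2+24q^4s-36p^4s^2-100p^2t^2$. ($L_3,L_2,L_1$ are, up to positive factors, the leading coefficients of the degree 3, 2, 1 remainders in the Sturm sequence of $f$.) *)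

From HB Require Import structures.
From mathcomp Require Import all_boot all_order all_algebra.
Set Implicit Arguments. Unset Strict Implicit. Unset Printing Implicit Defensive.
Import Order.TTheory GRing.Theory Num.Theory.
Local Open Scope ring_scope.

Definition quintic (R : nzRingType) (p q r s t : R) : {poly R} :=
  'X^5 + p *: 'X^4 + q *: 'X^3 + r *: 'X^2 + s *: 'X + t%:P.

Definition discr5 (R : nzRingType) (alpha : 'I_5 -> R) : R :=
  \prod_(i < 5) \prod_(j < 5 | (i < j)%N) (alpha i - alpha j) ^+ 2.

Definition L3 (R : nzRingType) (p q : R) : R := 2 * p ^+ 2 - 5 * q.

Definition L2 (R : nzRingType) (p q r s : R) : R :=
  40 * q * s - 16 * p ^+ 2 * s - 8 * r * p ^+ 3 + 38 * r * p * q
  + 3 * p ^+ 2 * q ^+ 2 - 12 * q ^+ 3 - 45 * r ^+ 2.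

Definition L1 (R : nzRingType) (p q r s t : R) : R :=
  - 264 * p * s ^+ 2 * r - 12 * p ^+ 3 * t * q ^+ 2 + 36 * r ^+ 3 * p * q
  - 124 * s * r * p * q ^+ 2 + 28 * s * r * p ^+ 3 * q + 260 * s * p * t * q
  - 132 * p ^+ 2 * q * r * t + 240 * p * r ^+ 2 * t + 234 * s * q * r ^+ 2
  + 32 * p ^+ 4 * t * r + 48 * p * t * q ^+ 3 - 56 * s * p ^+ 3 * t
  - 80 * q ^+ 2 * r * t + 194 * q * s ^+ 2 * p ^+ 2 - 600 * s * t * r
  - 6 * q ^+ 3 * s * p ^+ 2 + 2 * p ^+ 2 * q ^+ 2 * r ^+ 2
  - 12 * s * r ^+ 2 * p ^+ 2 - 54 * r ^+ 4 + 320 * s ^+ 3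
  - 8 * q ^+ 3 * r ^+ 2 - 8 * r ^+ 3 * p ^+ 3 + 250 * q * t ^+ 2
  - 176 * q ^+ 2 * s ^+ 2 + 24 * q ^+ 4 * s - 36 * p ^+ 4 * s ^+ 2
  - 100 * p ^+ 2 * t ^+ 2.

Definition nreal (C : numClosedFieldType) (alpha : 'I_5 -> C) : nat :=
  #|[pred i | alpha i \is Num.real]|.

(* Let f = x^5 + p x^4 + q x^3 + r x^2 + s x + t have real coefficients and
   complex roots alpha_0, ..., alpha_4.
   - By Vieta's formulas and Newton's identities the power sums s_k of the
     roots are real.  The Hankel array H_ij = s_(i+j) is the Gram array of the
     quadratic form Q(x) = sum_l (x_0 + x_1 alpha_l + ... + x_4 alpha_l^4)^2,
     and its leading principal minors are 5, 2 L3, L2, L1 and D (the last one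
     because H = V V^T for the Vandermonde matrix V of the roots).
   - Sylvester's criterion, proved here for orders <= 5 by Gaussian
     elimination, links positive leading minors with positivity of Q.
   - If the roots are real and distinct, Q is positive definite, so that
     L3, L2, L1 > 0.  If some root is not real, Q is negative at the real
     coefficient vector of (v x + w) G, where G is the real cubic with the
     other three roots; hence L3, L2, L1, D are not all positive.
   - Conjugation is an involution of distinct roots whose fixed points are the
     real roots: their number is odd, and D is a positive number times the
     product of the differences of the real roots, which is positive for one
     real root and negative for three. *)

From mathcomp Require Import all_boot all_order all_algebra.
From mathcomp Require Import ring zify.
Import Order.TTheory GRing.Theory Num.Theory.
Local Open Scope ring_scope.
Set Implicit Arguments. Unset Strict Implicit.

(* The five elements of 'I_5, as closed terms that compute. *)
Definition o0 : 'I_5 := @Ordinal 5 0 isT.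
Definition o1 : 'I_5 := @Ordinal 5 1 isT.
Definition o2 : 'I_5 := @Ordinal 5 2 isT.
Definition o3 : 'I_5 := @Ordinal 5 3 isT.
Definition o4 : 'I_5 := @Ordinal 5 4 isT.

Lemma big_ord5 (R : Type) (idx : R) (op : Monoid.law idx) (F : 'I_5 -> R) :
  \big[op/idx]_(i < 5) F i = op (F o0) (op (F o1) (op (F o2) (op (F o3) (F o4)))).
Proof.
have -> : index_enum 'I_5 = [:: o0; o1; o2; o3; o4].
  by rewrite /index_enum -enumT; apply: (inj_map val_inj); rewrite val_enum_ord.
by rewrite !big_cons big_nil Monoid.mulm1.
Qed.

Lemma big_ord5_cond (R : Type) (idx : R) (op : Monoid.law idx)
    (P : pred 'I_5) (F : 'I_5 -> R) :
  \big[op/idx]_(i < 5 | P i) F i =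
  op (if P o0 then F o0 else idx) (op (if P o1 then F o1 else idx)
    (op (if P o2 then F o2 else idx) (op (if P o3 then F o3 else idx)
      (if P o4 then F o4 else idx)))).
Proof. by rewrite big_mkcond big_ord5. Qed.

Section Vieta.
Variable R : comNzRingType.
Implicit Types (a : 'I_5 -> R) (p q r s t z : R).

Definition esym1 a := a o0 + a o1 + a o2 + a o3 + a o4.
Definition esym2 a :=
  a o0 * a o1 + a o0 * a o2 + a o0 * a o3 + a o0 * a o4 + a o1 * a o2 + a o1 * a o3
  + a o1 * a o4 + a o2 * a o3 + a o2 * a o4 + a o3 * a o4.
Definition esym3 a :=
  a o0 * a o1 * a o2 + a o0 * a o1 * a o3 + a o0 * a o1 * a o4 + a o0 * a o2 * a o3
  + a o0 * a o2 * a o4 + a o0 * a o3 * a o4 + a o1 * a o2 * a o3 + a o1 * a o2 * a o4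
  + a o1 * a o3 * a o4 + a o2 * a o3 * a o4.
Definition esym4 a :=
  a o0 * a o1 * a o2 * a o3 + a o0 * a o1 * a o2 * a o4 + a o0 * a o1 * a o3 * a o4
  + a o0 * a o2 * a o3 * a o4 + a o1 * a o2 * a o3 * a o4.
Definition esym5 a := a o0 * a o1 * a o2 * a o3 * a o4.

Lemma prod_XsubC_quintic a :
  \prod_(i < 5) ('X - (a i)%:P) =
  quintic (- esym1 a) (esym2 a) (- esym3 a) (esym4 a) (- esym5 a).
Proof.
rewrite big_ord5 /= /quintic -!mul_polyC /esym1 /esym2 /esym3 /esym4 /esym5; ring.
Qed.

Lemma coef_quintic p q r s t :
  [/\ (quintic p q r s t)`_4 = p, (quintic p q r s t)`_3 = q,
      (quintic p q r s t)`_2 = r, (quintic p q r s t)`_1 = s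
    & (quintic p q r s t)`_0 = t].
Proof.
rewrite /quintic !coefD !coefZ !coefXn !coefX !coefC /=.
by split; rewrite ?(mulr0, mulr1, addr0, add0r).
Qed.

Lemma vieta_quintic p q r s t a :
  quintic p q r s t = \prod_(i < 5) ('X - (a i)%:P) ->
  [/\ p = - esym1 a, q = esym2 a, r = - esym3 a, s = esym4 a & t = - esym5 a].
Proof.
rewrite prod_XsubC_quintic => fE.
have [f4 f3 f2 f1 f0] := coef_quintic p q r s t.
have [g4 g3 g2 g1 g0] :=
  coef_quintic (- esym1 a) (esym2 a) (- esym3 a) (esym4 a) (- esym5 a).
by split; [rewrite -f4 fE g4 | rewrite -f3 fE g3 | rewrite -f2 fE g2
          | rewrite -f1 fE g1 | rewrite -f0 fE g0].
Qed.

Lemma horner_quintic p q r s t z :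
  (quintic p q r s t).[z] = z ^+ 5 + p * z ^+ 4 + q * z ^+ 3 + r * z ^+ 2 + s * z + t.
Proof. by rewrite /quintic !hornerE. Qed.

Lemma quintic_root_pow5 p q r s t a :
  quintic p q r s t = \prod_(i < 5) ('X - (a i)%:P) ->
  forall i, a i ^+ 5 = - (p * a i ^+ 4 + q * a i ^+ 3 + r * a i ^+ 2 + s * a i + t).
Proof.
move=> fE i; apply/eqP; rewrite -subr_eq0 opprK.
have : (quintic p q r s t).[a i] = 0.
  by rewrite fE horner_prod (bigD1 i) //= hornerXsubC subrr mul0r.
by rewrite horner_quintic => <-; apply/eqP; ring.
Qed.

End Vieta.

Definition psum {R : nzRingType} {n : nat} (a : 'I_n -> R) (k : nat) : R :=
  \sum_(i < n) a i ^+ k.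

Section Newton.
Variables (R : comNzRingType) (p q r s t : R) (a : 'I_5 -> R).
Hypothesis fE : quintic p q r s t = \prod_(i < 5) ('X - (a i)%:P).

Lemma newton_quintic :
  [/\ psum a 0 = 5, psum a 1 = - p, psum a 2 = - (p * psum a 1) - 2 * q,
      psum a 3 = - (p * psum a 2 + q * psum a 1) - 3 * r
    & psum a 4 = - (p * psum a 3 + q * psum a 2 + r * psum a 1) - 4 * s].
Proof.
have [-> -> -> -> _] := vieta_quintic fE.
by rewrite /psum !big_ord5 /= /esym1 /esym2 /esym3 /esym4; split; ring.
Qed.

Lemma newton_quintic_rec k :
  psum a (k + 5) = - (p * psum a (k + 4) + q * psum a (k + 3) + r * psum a (k + 2)
                      + s * psum a (k + 1) + t * psum a k).
Proof. by rewrite /psum !big_ord5 /= !exprD !(quintic_root_pow5 fE); ring. Qed.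

End Newton.

Lemma psum_real (R : numDomainType) (p q r s t : R) (a : 'I_5 -> R) :
  p \is Num.real -> q \is Num.real -> r \is Num.real ->
  s \is Num.real -> t \is Num.real ->
  quintic p q r s t = \prod_(i < 5) ('X - (a i)%:P) ->
  forall k, psum a k \is Num.real.
Proof.
move=> rp rq rr rs rt fE.
have [n0 n1 n2 n3 n4] := newton_quintic fE.
suff real_below k : forall j, (j < 5 + k)%N -> psum a j \is Num.real.
  by move=> k; apply: (real_below k); lia.
elim: k => [|k IH] j lt_j.
  have r1 : psum a 1 \is Num.real by rewrite n1 rpredN.
  have r2 : psum a 2 \is Num.real by rewrite n2 rpredB ?rpredN ?rpredM ?rpred_nat.
  have r3 : psum a 3 \is Num.real by rewrite n3 rpredB ?rpredN ?rpredD ?rpredM ?rpred_nat.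
  have r4 : psum a 4 \is Num.real by rewrite n4 rpredB ?rpredN ?rpredD ?rpredM ?rpred_nat.
  by case: j lt_j => [|[|[|[|[|j]]]]] // _; rewrite n0 rpred_nat.
have [/IH // | le_j] := ltnP j (5 + k).
have -> : j = (k + 5)%N by lia.
by rewrite (newton_quintic_rec fE) rpredN !rpredD ?rpredM ?IH //; lia.
Qed.

Definition qform {R : nzRingType} (n : nat) (m : nat -> nat -> R) (x : nat -> R) : R :=
  \sum_(0 <= i < n) \sum_(0 <= j < n) x i * x j * m i j.

Definition peval {R : nzRingType} (n : nat) (x : nat -> R) (z : R) : R :=
  \sum_(0 <= k < n) x k * z ^+ k.

Definition hankel {R : nzRingType} {n : nat} (a : 'I_n -> R) (i j : nat) : R :=
  psum a (i + j).

Lemma qform_hankel (R : comNzRingType) (n m : nat) (a : 'I_n -> R) (x : nat -> R) :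
  qform m (hankel a) x = \sum_(l < n) peval m x (a l) ^+ 2.
Proof.
rewrite /qform /hankel /psum.
transitivity (\sum_(0 <= i < m) \sum_(0 <= j < m) \sum_(l < n)
                 x i * a l ^+ i * (x j * a l ^+ j)).
  apply: eq_bigr => i _; apply: eq_bigr => j _; rewrite mulr_sumr.
  by apply: eq_bigr => l _; rewrite exprD; ring.
under eq_bigr do rewrite exchange_big; rewrite exchange_big.
apply: eq_bigr => l _; rewrite expr2 /peval mulr_suml.
by apply: eq_bigr => i _; rewrite mulr_sumr.
Qed.

Lemma peval_coef (R : nzRingType) (n : nat) (P : {poly R}) (z : R) :
  (size P <= n)%N -> peval n (fun k => P`_k) z = P.[z].
Proof. by move=> le_P; rewrite (horner_coef_wide z le_P) /peval big_mkord. Qed.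

(* Computable variant of [bump]. *)
Definition nbump (j k : nat) : nat := if Nat.leb j k then k.+1 else k.

Fixpoint minor {R : nzRingType} (n : nat) (m : nat -> nat -> R) : R :=
  if n is n'.+1 then
    \sum_(0 <= j < n) (-1) ^+ j * m 0%N j * minor n' (fun i k => m i.+1 (nbump j k))
  else 1.

Lemma nbumpE j k : nbump j k = bump j k.
Proof.
rewrite /bump /nbump; suff -> : Nat.leb j k = (j <= k)%N by case: (j <= k)%N.
by elim: j k => [|j IH] [|k] //; exact: IH.
Qed.

Lemma minorE (R : comNzRingType) n (m : nat -> nat -> R) :
  minor n m = \det (\matrix_(i < n, j < n) m i j).
Proof.
elim: n m => [|n IH] m; first by rewrite det_mx00.
rewrite (expand_det_row _ ord0) /= big_mkord.
apply: eq_bigr => j _; rewrite mxE /cofactor IH.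
have -> : row' ord0 (col' j (\matrix_(i < n.+1, j < n.+1) m i j)) =
          \matrix_(i < n, k < n) m i.+1 (nbump j k).
  by apply/matrixP => i k; rewrite !mxE /= nbumpE.
by rewrite add0n mulrA [m _ _ * _]mulrC.
Qed.

(* The Hankel determinant is the discriminant: H = V V^T for the Vandermonde
   matrix V of a. *)
Lemma minor_hankel (R : comNzRingType) (n : nat) (a : 'I_n -> R) :
  minor n (hankel a) = \prod_(i < n) \prod_(j < n | (i < j)%N) (a i - a j) ^+ 2.
Proof.
pose V := Vandermonde n (\row_j a j).
rewrite minorE.
have -> : \matrix_(i < n, j < n) hankel a i j = V *m V^T.
  apply/matrixP => i j; rewrite !mxE /hankel /psum; apply: eq_bigr => k _.
  by rewrite !mxE -exprD.
rewrite det_mulmx det_tr det_Vandermonde -expr2 -prodrXl.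
apply: eq_bigr => i _; rewrite -prodrXl; apply: eq_bigr => j _.
by rewrite !mxE -sqrrN opprB.
Qed.

Lemma minors_quintic (R : comNzRingType) (p q r s t : R) (a : 'I_5 -> R) :
  quintic p q r s t = \prod_(i < 5) ('X - (a i)%:P) ->
  [/\ minor 1 (hankel a) = 5, minor 2 (hankel a) = 2 * L3 p q,
      minor 3 (hankel a) = L2 p q r s & minor 4 (hankel a) = L1 p q r s t].
Proof.
move=> fE; have [n0 n1 n2 n3 n4] := newton_quintic fE.
have n5 := newton_quintic_rec fE 0; have n6 := newton_quintic_rec fE 1.
rewrite /= unlock /nbump /hankel /=.
rewrite n6 n5 n4 n3 n2 n1 n0 /L3 /L2 /L1.
by split; ring.
Qed.

Section Sylvester.
(* Sylvester's criterion for the real symmetric arrays of order at most 5,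
   by induction on the order through one step of Gaussian elimination. *)

Definition schur {R : fieldType} (m : nat -> nat -> R) (i j : nat) : R :=
  m i.+1 j.+1 - m i.+1 0%N * m 0%N j.+1 / m 0%N 0%N.

Lemma minor1 (R : nzRingType) (m : nat -> nat -> R) : minor 1 m = m 0%N 0%N.
Proof. by rewrite /= unlock /= expr0 mul1r mulr1 addr0. Qed.

Lemma minor_schur (F : fieldType) k (m : nat -> nat -> F) :
  (k <= 4)%N -> m 0%N 0%N != 0 -> minor k.+1 m = m 0%N 0%N * minor k (schur m).
Proof.
move=> le_k nz_m00; case: k le_k => [|[|[|[|[|k]]]]] // _;
  rewrite /= unlock /nbump /schur /=; first ring.
all: by field.
Qed.

Lemma qform_schur (F : fieldType) n (m : nat -> nat -> F) x : (n <= 4)%N ->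
  (forall i j, m i j = m j i) -> m 0%N 0%N != 0 ->
  qform n.+1 m x =
    m 0%N 0%N * (x 0%N + (\sum_(0 <= j < n) m 0%N j.+1 * x j.+1) / m 0%N 0%N) ^+ 2
    + qform n (schur m) (fun i => x i.+1).
Proof.
move=> le_n m_sym nz_m00; case: n le_n => [|[|[|[|[|n]]]]] // _;
  rewrite /qform /= unlock /schur /=;
  rewrite ?[m 1%N 0%N]m_sym ?[m 2%N 0%N]m_sym ?[m 3%N 0%N]m_sym ?[m 4%N 0%N]m_sym;
  by field.
Qed.

Lemma schur_sym (F : fieldType) (m : nat -> nat -> F) :
  (forall i j, m i j = m j i) -> forall i j, schur m i j = schur m j i.
Proof.
by move=> m_sym i j; rewrite /schur (m_sym i.+1 j.+1) (m_sym i.+1 0%N) (m_sym j.+1 0%N); ring.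
Qed.

Lemma schur_real (F : numFieldType) (m : nat -> nat -> F) :
  (forall i j, m i j \is Num.real) -> forall i j, schur m i j \is Num.real.
Proof. by move=> m_real i j; rewrite /schur rpredB ?rpredM ?rpredV. Qed.

Lemma sylvester_psd (F : numFieldType) n (m : nat -> nat -> F) x : (n <= 5)%N ->
  (forall i j, m i j \is Num.real) -> (forall i j, m i j = m j i) ->
  (forall k, (0 < k <= n)%N -> 0 < minor k m) -> (forall i, x i \is Num.real) ->
  0 <= qform n m x.
Proof.
elim: n m x => [|n IH] m x le_n m_real m_sym minor_pos x_real.
  by rewrite /qform big_geq.
have m00_pos : 0 < m 0%N 0%N by rewrite -minor1; apply: minor_pos.
rewrite qform_schur // ?lt0r_neq0 //; apply: addr_ge0.
  apply: mulr_ge0; first exact: ltW.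
  apply: real_exprn_even_ge0 => //.
  by rewrite rpredD ?rpredM ?rpredV ?rpred_sum // => j _; apply: rpredM.
apply: IH => //; [exact: ltnW | exact: schur_real | exact: schur_sym |].
move=> k /andP [k_gt0 le_kn].
have : 0 < minor k.+1 m by apply: minor_pos; rewrite /= ltnS.
rewrite minor_schur ?lt0r_neq0 //; last exact: leq_trans le_kn _.
by rewrite pmulr_rgt0.
Qed.

Lemma qform_e0 (R : nzRingType) n (m : nat -> nat -> R) : (n <= 4)%N ->
  qform n.+1 m (fun i => if i is 0%N then 1 else 0) = m 0%N 0%N.
Proof.
by case: n => [|[|[|[|[|n]]]]] // _; rewrite /qform /= unlock /=;
  rewrite ?(mul0r, mulr0, mul1r, add0r, addr0).
Qed.

Lemma pd_minors_pos (F : numFieldType) n (m : nat -> nat -> F) : (n <= 5)%N ->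
  (forall i j, m i j \is Num.real) -> (forall i j, m i j = m j i) ->
  (forall x, (forall i, x i \is Num.real) -> (exists2 i, (i < n)%N & x i != 0) ->
     0 < qform n m x) ->
  forall k, (0 < k <= n)%N -> 0 < minor k m.
Proof.
elim: n m => [|n IH] m le_n m_real m_sym m_pd k; first by case: k.
have m00_pos : 0 < m 0%N 0%N.
  rewrite -(@qform_e0 _ n m) //; apply: m_pd.
    by case=> [|i]; rewrite ?rpred0 ?rpred1.
  by exists 0%N => //; rewrite oner_neq0.
have nz_m00 : m 0%N 0%N != 0 by rewrite lt0r_neq0.
have schur_pd x : (forall i, x i \is Num.real) -> (exists2 i, (i < n)%N & x i != 0) ->
    0 < qform n (schur m) x.
  move=> x_real [i lt_in nz_xi].
  pose y i := if i is i'.+1 then x i' else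
     - (\sum_(0 <= j < n) m 0%N j.+1 * x j) / m 0%N 0%N.
  have := m_pd y _ _; rewrite qform_schur // /y /= mulNr addNr expr0n /= mulr0 add0r.
  apply; last by exists i.+1.
  case=> [|j]; last exact: x_real.
  by rewrite rpredN rpredM ?rpredV ?rpred_sum // => j _; apply: rpredM.
case: k => [|[|k]] //; first by rewrite minor1.
move=> /andP [_ le_kn].
rewrite minor_schur ?mulr_gt0 //; last by rewrite -ltnS (leq_trans le_kn).
apply: IH => //; [exact: ltnW | exact: schur_real | exact: schur_sym].
Qed.

End Sylvester.

Lemma horner_conj_real (C : numClosedFieldType) (P : {poly C}) (z : C) :
  P \is a polyOver Num.real -> P.[z^*] = (P.[z])^*.
Proof.
move=> /polyOverP P_real; rewrite -horner_map /= map_poly_id // => c /(nthP 0) [k _ <-].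
exact/conj_Creal/P_real.
Qed.

Lemma polyOver_realE (C : numClosedFieldType) (P : {poly C}) :
  (P \is a polyOver Num.real) = (map_poly Num.conj P == P).
Proof.
apply/polyOverP/eqP => [P_real | P_fixed k].
  by apply/polyP => k; rewrite coef_map /= conj_Creal.
by rewrite CrealE -[in X in _ == X]P_fixed coef_map.
Qed.

Lemma quintic_real (C : numClosedFieldType) (p q r s t : C) :
  p \is Num.real -> q \is Num.real -> r \is Num.real ->
  s \is Num.real -> t \is Num.real -> quintic p q r s t \is a polyOver Num.real.
Proof.
move=> rp rq rr rs rt; apply/polyOverP => k.
rewrite /quintic !coefD !coefZ !coefXn !coefX !coefC.
by case: k => [|[|[|[|[|[|k]]]]]]; rewrite /= ?(mulr0, mulr1, addr0, add0r, rpred0, rpred1).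
Qed.

Lemma conj_root (C : numClosedFieldType) (p q r s t : C) (a : 'I_5 -> C) :
  p \is Num.real -> q \is Num.real -> r \is Num.real ->
  s \is Num.real -> t \is Num.real ->
  quintic p q r s t = \prod_(i < 5) ('X - (a i)%:P) ->
  forall i, exists j, a j = (a i)^*.
Proof.
move=> rp rq rr rs rt fE i.
have : (quintic p q r s t).[(a i)^*] == 0.
  rewrite horner_conj_real ?quintic_real // fE horner_prod (bigD1 i) //=.
  by rewrite hornerXsubC subrr mul0r rmorph0.
rewrite fE horner_prod prodf_seq_eq0 => /hasP [j _ /=].
by rewrite hornerXsubC subr_eq0 => /eqP ->; exists j.
Qed.

Lemma normsq_gt0 (C : numClosedFieldType) (x : C) : x != 0 -> 0 < x * x^*.
Proof. by move=> nz_x; rewrite -normCK exprn_gt0 // normr_gt0. Qed.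

Section ConjugationOnIndices.
(* When the family a is injective and closed under conjugation, conjugation
   induces an involution of the indices whose fixed points are the real
   elements; the discriminant then splits into a product over the real
   elements times a positive number. *)
Variables (C : numClosedFieldType) (n : nat) (a : 'I_n -> C).
Hypothesis a_conj : forall i, exists j, a j = (a i)^*.
Hypothesis a_inj : injective a.

Definition conj_idx (i : 'I_n) : 'I_n := odflt i [pick j | a j == (a i)^*].

Lemma conj_idxE i : a (conj_idx i) = (a i)^*.
Proof.
rewrite /conj_idx; case: pickP => [j /eqP // | no_j].
by have [j aj] := a_conj i; have := no_j j; rewrite aj eqxx.
Qed.

Lemma conj_idxK : involutive conj_idx.
Proof. by move=> i; apply: a_inj; rewrite !conj_idxE conjCK. Qed.

Lemma conj_idx_inj : injective conj_idx.
Proof. exact: can_inj conj_idxK. Qed.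

Lemma conj_idx_fixed i : (conj_idx i == i) = (a i \is Num.real).
Proof. by rewrite CrealE -conj_idxE; apply/eqP/eqP => [-> // | /a_inj]. Qed.

Lemma prod_conj_pairs (F : 'I_n -> C) : (forall i, F (conj_idx i) = (F i)^*) ->
  \prod_(i < n | conj_idx i != i) F i =
  \prod_(i < n | (i < conj_idx i)%N) (F i * (F i)^*).
Proof.
move=> F_conj; rewrite (bigID (fun i : 'I_n => (i < conj_idx i)%N)) /= big_split /=.
congr (_ * _).
  apply: eq_bigl => i; case: (ltngtP i (conj_idx i)) => lt_i; rewrite ?andbT ?andbF //.
  by apply/eqP => eq_i; move: lt_i; rewrite eq_i ltnn.
rewrite (reindex_inj conj_idx_inj) /=.
apply: eq_big => [i | i _]; last by rewrite F_conj.
rewrite conj_idxK; case: (ltngtP i (conj_idx i)) => lt_i; rewrite ?andbT ?andbF //=.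
- by apply/eqP => eq_i; move: lt_i; rewrite -eq_i ltnn.
- by apply/negbTE; rewrite negbK; apply/eqP/val_inj.
Qed.

Lemma odd_card_real : odd #|[pred i | a i \is Num.real]| = odd n.
Proof.
set Fx := [set i | conj_idx i == i].
set P := [set i : 'I_n | (i < conj_idx i)%N].
set N := [set i : 'I_n | (conj_idx i < i)%N].
have -> : #|[pred i | a i \is Num.real]| = #|Fx|.
  by apply: eq_card => i; rewrite /Fx !inE conj_idx_fixed.
have FxC : ~: Fx = P :|: N.
  apply/setP => i; rewrite !inE; case: (ltngtP i (conj_idx i)) => lt_i //=.
  - by apply/eqP => eq_i; move: lt_i; rewrite eq_i ltnn.
  - by apply/eqP => eq_i; move: lt_i; rewrite eq_i ltnn.
  - by rewrite (_ : conj_idx i = i) ?eqxx //; apply/val_inj; rewrite /= -lt_i.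
have PN0 : P :&: N = set0.
  apply/setP => i; rewrite !inE; apply/negP => /andP [lt1 lt2].
  by have := ltn_trans lt1 lt2; rewrite ltnn.
have NE : N = conj_idx @: P.
  apply/setP => i; rewrite !inE; apply/idP/imsetP => [lt_i | [j lt_j ->]].
    by exists (conj_idx i); rewrite ?inE conj_idxK.
  by move: lt_j; rewrite inE conj_idxK.
have := cardsC Fx; rewrite FxC cardsU PN0 cards0 subn0 NE card_imset ?card_ord //.
  by move=> card_n; rewrite -[in RHS]card_n oddD addnn odd_double addbF.
exact: conj_idx_inj.
Qed.

Definition diffprod (i : 'I_n) : C := \prod_(j < n | j != i) (a i - a j).

Definition real_diffprod : C :=
  \prod_(i < n | a i \is Num.real)
    \prod_(j < n | (j != i) && (a j \is Num.real)) (a i - a j).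

Lemma conj_diffprod i : diffprod (conj_idx i) = (diffprod i)^*.
Proof.
rewrite /diffprod rmorph_prod (reindex_inj conj_idx_inj) /=.
apply: eq_big => [j | j _]; first by rewrite (inj_eq conj_idx_inj).
by rewrite rmorphB /= !conj_idxE.
Qed.

Lemma diffprod_neq0 i : diffprod i != 0.
Proof.
apply/prodf_neq0 => j ne_ji; rewrite subr_eq0; apply/eqP => /a_inj eq_ij.
by rewrite eq_ij eqxx in ne_ji.
Qed.

Lemma prod_diffprod_real : exists2 P, 0 < P &
  \prod_(i < n) diffprod i = real_diffprod * P.
Proof.
rewrite (bigID (fun i => conj_idx i == i)) /= (prod_conj_pairs conj_diffprod).
have split_real i : conj_idx i == i -> diffprod i =
   (\prod_(j < n | (j != i) && (a j \is Num.real)) (a i - a j)) *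
   \prod_(j < n | (j < conj_idx j)%N) ((a i - a j) * (a i - a j)^*).
  move=> fixed_i; rewrite /diffprod (bigID (fun j => conj_idx j == j)) /=.
  congr (_ * _).
    by apply: eq_bigl => j; rewrite conj_idx_fixed.
  rewrite -(prod_conj_pairs (F := fun j => a i - a j)).
    apply: eq_bigl => j; case: eqP => [eq_j|] //=; rewrite ?andbT //.
    by rewrite eq_j (eqP fixed_i) eqxx.
  move=> j; rewrite rmorphB /= conj_idxE; congr (_ - _).
  by apply/esym/conj_Creal; rewrite -conj_idx_fixed.
rewrite (eq_bigr _ split_real) big_split /= -mulrA.
have -> : \prod_(i < n | conj_idx i == i)
            \prod_(j < n | (j != i) && (a j \is Num.real)) (a i - a j) = real_diffprod.
  by apply: eq_bigl => i; rewrite conj_idx_fixed.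
eexists; last reflexivity.
apply: mulr_gt0; apply: prodr_gt0 => i fixed_i.
  apply: prodr_gt0 => j lt_j; apply: normsq_gt0; rewrite subr_eq0.
  apply/eqP => /a_inj eq_ij; by move: lt_j; rewrite -eq_ij (eqP fixed_i) ltnn.
exact/normsq_gt0/diffprod_neq0.
Qed.

Lemma real_diffprod_enum : real_diffprod =
  \prod_(i <- enum [pred i | a i \is Num.real])
    \prod_(j <- enum [pred i | a i \is Num.real] | j != i) (a i - a j).
Proof.
rewrite /real_diffprod big_enum /=; apply: eq_big => [i | i _]; first by rewrite inE.
by rewrite big_enum_cond /=; apply: eq_bigl => j; rewrite inE andbC.
Qed.

Lemma real_diffprod1 : #|[pred i | a i \is Num.real]| = 1%N -> real_diffprod = 1.
Proof.
rewrite real_diffprod_enum cardE; case: (enum _) => [|x [|y l]] //= _.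
by rewrite !big_cons !big_nil eqxx /= mulr1.
Qed.

(* With three real elements it is minus a nonzero real square. *)
Lemma real_diffprod3 : #|[pred i | a i \is Num.real]| = 3%N -> real_diffprod < 0.
Proof.
rewrite real_diffprod_enum cardE.
have uniq_enum := enum_uniq [pred i | a i \is Num.real].
have mem_real := mem_enum [pred i | a i \is Num.real].
case: (enum _) uniq_enum mem_real => [|x [|y [|z [|w l]]]] //= uniq_xyz mem_real _.
move: uniq_xyz; rewrite !inE !negb_or => /and3P [/andP [ne_xy ne_xz] ne_yz _].
have [rx ry rz] : [/\ a x \is Num.real, a y \is Num.real & a z \is Num.real].
  have real_of u : u \in [:: x; y; z] -> a u \is Num.real by rewrite mem_real inE.
  by split; apply: real_of; rewrite !inE eqxx ?orbT.
rewrite !big_cons !big_nil !eqxx /= ne_xy ne_xz ne_yz ![_ == x]eq_sym ![z == y]eq_sym.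
rewrite ne_xy ne_xz ne_yz /=.
set V := (a x - a y) * (a x - a z) * (a y - a z).
have -> : (a x - a y) * ((a x - a z) * 1) * ((a y - a x) * ((a y - a z) * 1) *
   ((a z - a x) * ((a z - a y) * 1) * 1)) = - V ^+ 2 by rewrite /V; ring.
have nz_V : V != 0.
  by rewrite /V !mulf_neq0 // subr_eq0; apply/eqP => /a_inj /eqP; apply/negP.
rewrite oppr_lt0 lt_def sqrf_eq0 nz_V /=.
by apply: real_exprn_even_ge0 => //; rewrite /V !rpredM ?rpredB.
Qed.

End ConjugationOnIndices.

Lemma prod_XsubC_conj_stable (C : numClosedFieldType) (n : nat) (a : 'I_n -> C)
    (A : {pred 'I_n}) :
  (forall i, exists j, a j = (a i)^*) -> injective a ->
  (forall i, (conj_idx a i \in A) = (i \in A)) ->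
  \prod_(i in A) ('X - (a i)%:P) \is a polyOver Num.real.
Proof.
move=> a_conj a_inj A_stable; rewrite polyOver_realE rmorph_prod /=.
rewrite [X in _ == X](reindex_inj (conj_idx_inj a_conj a_inj)) /=.
apply/eqP/eq_big => [i | i _]; first by rewrite A_stable.
by rewrite map_polyXsubC conj_idxE.
Qed.

Lemma real_affine_combination (C : numClosedFieldType) (g z : C) :
  g \isn't Num.real -> exists v w, [/\ v \is Num.real, w \is Num.real & v * g + w = z].
Proof.
move=> nonreal_g.
have nz_im : g - g^* != 0.
  by rewrite subr_eq0; apply: contra nonreal_g => /eqP g_conj; rewrite CrealE -g_conj.
pose v := (z - z^*) / (g - g^*).
have vE : v * (g - g^*) = z - z^* by rewrite /v divfK.
have v_real : v \is Num.real.
  apply/CrealP; rewrite /v rmorphM fmorphV !rmorphB /= !conjCK.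
  by rewrite -[z^* - z]opprB -[g^* - g]opprB invrN mulrNN.
exists v, (z - v * g); split => //; last by rewrite addrC subrK.
apply/CrealP; rewrite rmorphB rmorphM /= (conj_Creal v_real).
have -> : z^* - v * g^* = z - v * g + (v * (g - g^*) - (z - z^*)) by ring.
by rewrite vE subrr addr0.
Qed.

Lemma conj_pair_cofactor (C : numClosedFieldType) (a : 'I_5 -> C) (i0 : 'I_5) :
  (forall i, exists j, a j = (a i)^*) -> injective a -> a i0 \isn't Num.real ->
  exists G : {poly C}, [/\ G \is a polyOver Num.real, size G = 4%N,
    G.[a i0] != 0 & forall l, l != i0 -> l != conj_idx a i0 -> G.[a l] = 0].
Proof.
move=> a_conj a_inj nonreal_i0; set j0 := conj_idx a i0.
have conj_inj := conj_idx_inj a_conj a_inj.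
have conj_j0 : conj_idx a j0 = i0 := conj_idxK a_conj a_inj i0.
have ne_i0j0 : i0 != j0 by rewrite eq_sym (conj_idx_fixed a_conj a_inj).
pose A := [pred l : 'I_5 | (l != i0) && (l != j0)].
have card_A : #|A| = 3%N.
  have := cardsC [set i0; j0]; rewrite cards2 ne_i0j0 card_ord.
  suff -> : #|A| = #|~: [set i0; j0]| by lia.
  by apply: eq_card => l; rewrite !inE negb_or.
exists (\prod_(l in A) ('X - (a l)%:P)); split.
- apply: prod_XsubC_conj_stable => // l; rewrite !inE.
  rewrite -[conj_idx a l == i0](inj_eq conj_inj) -[conj_idx a l == j0](inj_eq conj_inj).
  by rewrite conj_idxK // conj_j0 andbC.
- rewrite -big_enum -(big_map a xpredT (fun z => 'X - z%:P)).
  by rewrite size_prod_XsubC size_map -cardE card_A.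
- rewrite horner_prod; apply/prodf_neq0 => l /andP [ne_li0 _].
  by rewrite hornerXsubC subr_eq0; apply: contra ne_li0 => /eqP /a_inj ->.
- move=> l ne_li0 ne_lj0; rewrite horner_prod (bigD1 l) ?inE ?ne_li0 ?ne_lj0 //=.
  by rewrite hornerXsubC subrr mul0r.
Qed.

(* Hermite's argument: a nonreal root of a real quintic with distinct roots
   makes the Hankel form negative at some real vector, namely the coefficients
   of (v X + w) G, G the real cubic of the other roots, with v, w real chosen
   so that its values at the nonreal pair are purely imaginary. *)
Lemma hankel_form_neg (C : numClosedFieldType) (p q r s t : C) (a : 'I_5 -> C) i0 :
  p \is Num.real -> q \is Num.real -> r \is Num.real ->
  s \is Num.real -> t \is Num.real ->
  quintic p q r s t = \prod_(i < 5) ('X - (a i)%:P) -> injective a ->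
  a i0 \isn't Num.real ->
  exists2 x : nat -> C, (forall k, x k \is Num.real) & qform 5 (hankel a) x < 0.
Proof.
move=> rp rq rr rs rt fE a_inj nonreal_i0.
have a_conj := conj_root rp rq rr rs rt fE.
have [G [G_real G_size nz_G G_roots]] := conj_pair_cofactor a_conj a_inj nonreal_i0.
set g := a i0 in nz_G nonreal_i0 *; set j0 := conj_idx a i0 in G_roots *.
set y := G.[g] in nz_G *.
have a_j0 : a j0 = g^* := conj_idxE a_conj i0.
have ne_j0i0 : j0 != i0 by rewrite (conj_idx_fixed a_conj a_inj).
have [v [w [v_real w_real vw]]] := real_affine_combination ('i * y^*) nonreal_i0.
pose P := G * (v%:P * 'X + w%:P).
have P_real : P \is a polyOver Num.real.
  move: G_real; rewrite !polyOver_realE rmorphM => /eqP /= ->.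
  by rewrite rmorphD rmorphM /= map_polyX !map_polyC /= !conj_Creal.
have P_size : (size P <= 5)%N.
  have size_lin : (size (v%:P * 'X + w%:P)%R <= 2)%N.
    by rewrite size_MXaddC size_polyC; case: ifP => //; case: (v != 0).
  apply: leq_trans (size_polyMleq _ _) _; rewrite G_size addSn /=.
  by rewrite -[5%N]/(3 + 2)%N leq_add2l.
have Pg : P.[g] = 'i * (y * y^*).
  by rewrite /P hornerM hornerD hornerMX !hornerC -/y vw; ring.
have N_pos : 0 < y * y^* := normsq_gt0 nz_G.
exists (fun k => P`_k) => [k | ]; first exact: (polyOverP P_real).
rewrite qform_hankel; under eq_bigr do rewrite peval_coef //.
rewrite (bigD1 i0) // (bigD1 j0) //= big1 => [|l /andP [ne_li0 ne_lj0]]; last first.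
  by rewrite hornerM G_roots // mul0r expr0n.
rewrite a_j0 horner_conj_real // Pg rmorphM /= conjCi (conj_Creal (gtr0_real N_pos)).
have -> : ('i * (y * y^*)) ^+ 2 + ((- 'i * (y * y^*)) ^+ 2 + 0) =
          'i ^+ 2 * (2 * (y * y^*) ^+ 2) by ring.
by rewrite sqrCi mulN1r oppr_lt0 mulr_gt0 ?ltr0n ?exprn_gt0.
Qed.

(* For distinct real points, the Hankel form is positive definite: the values
   of a nonzero polynomial of degree < n cannot all vanish at n points. *)
Lemma hankel_form_pd (F : numFieldType) (n : nat) (a : 'I_n -> F) :
  injective a -> (forall i, a i \is Num.real) ->
  forall x, (forall k, x k \is Num.real) -> (exists2 i, (i < n)%N & x i != 0) ->
  0 < qform n (hankel a) x.
Proof.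
move=> a_inj a_real x x_real [i0 lt_i0n nz_x].
have sq_ge0 (l : 'I_n) : true -> 0 <= peval n x (a l) ^+ 2.
  move=> _; apply: real_exprn_even_ge0 => //; rewrite /peval rpred_sum // => k _.
  by rewrite rpredM ?rpredX.
rewrite qform_hankel lt_def sumr_ge0 ?andbT //; apply/negP => /eqP sum0.
pose V := Vandermonde n (\row_j a j); pose X : 'rV[F]_n := \row_k x k.
have XV0 : X *m V = 0.
  apply/rowP => l; rewrite !mxE.
  have : peval n x (a l) ^+ 2 = 0 := psumr_eq0P sq_ge0 sum0 (i := l) isT.
  move=> /eqP; rewrite sqrf_eq0 /peval big_mkord => /eqP val0.
  by rewrite -[RHS]val0; apply: eq_bigr => k _; rewrite !mxE.
have V_unit : V \in unitmx.
  rewrite unitmxE unitfE det_Vandermonde; apply/prodf_neq0 => i _.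
  apply/prodf_neq0 => j lt_ij; rewrite !mxE subr_eq0; apply/eqP => /a_inj eq_ji.
  by move: lt_ij; rewrite eq_ji ltnn.
have X0 : X = 0 by rewrite -(mulmxK V_unit X) XV0 mul0mx.
by move: nz_x; have := congr1 (fun M : 'rV[F]_n => M 0 (Ordinal lt_i0n)) X0;
  rewrite !mxE => ->; rewrite eqxx.
Qed.

(* The discriminant of five elements is the product of their diffprods
   (the sign (-1)^(5*4/2) is +1). *)
Lemma discr5_diffprod (C : numClosedFieldType) (a : 'I_5 -> C) :
  discr5 a = \prod_(i < 5) diffprod a i.
Proof. by rewrite /discr5 /diffprod big_ord5 /= !big_ord5_cond /=; ring. Qed.

Lemma discr5_neq0 (R : idomainType) (a : 'I_5 -> R) : discr5 a != 0 <-> injective a.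
Proof.
split => [nz_D i j eq_a | a_inj].
  apply/val_inj/eqP; apply: contraTT nz_D => ne_ij; rewrite negbK.
  wlog lt_ij : i j eq_a ne_ij / (i < j)%N.
    move=> wlog_lt; case: (ltngtP i j) => [|lt_ji|eq_ij]; first exact: wlog_lt.
      by apply: (wlog_lt j i); rewrite // eq_sym.
    by move/eqP: ne_ij.
  rewrite /discr5 (bigD1 i) //= (bigD1 j) //= eq_a subrr expr0n /=.
  by rewrite !mul0r.
apply/prodf_neq0 => i _; apply/prodf_neq0 => j lt_ij.
rewrite sqrf_eq0 subr_eq0; apply/eqP => /a_inj eq_ij.
by move: lt_ij; rewrite eq_ij ltnn.
Qed.

Lemma discr_real_gt0 (R : numDomainType) (n : nat) (a : 'I_n -> R) :
  injective a -> (forall i, a i \is Num.real) ->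
  0 < \prod_(i < n) \prod_(j < n | (i < j)%N) (a i - a j) ^+ 2.
Proof.
move=> a_inj a_real; apply: prodr_gt0 => i _; apply: prodr_gt0 => j lt_ij.
rewrite lt_def sqrf_eq0 subr_eq0 real_exprn_even_ge0 ?rpredB ?andbT //.
by apply/eqP => /a_inj eq_ij; move: lt_ij; rewrite eq_ij ltnn.
Qed.

Lemma nreal_eq5 (C : numClosedFieldType) (a : 'I_5 -> C) :
  nreal a = 5%N <-> forall i, a i \is Num.real.
Proof.
split => [n5 i | a_real]; last first.
  by rewrite /nreal -[RHS](card_ord 5); apply: eq_card => i; rewrite !inE a_real.
have := cardC [pred i | a i \is Num.real]; rewrite -/(nreal a) n5 card_ord.
by move=> /(canRL (addKn 5)); rewrite subnn => /card0_eq /(_ i); rewrite !inE => /negbFE.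
Qed.

Lemma discr5_sign (C : numClosedFieldType) (a : 'I_5 -> C) :
  (forall i, exists j, a j = (a i)^*) -> injective a ->
  [/\ [\/ nreal a = 1%N, nreal a = 3%N | nreal a = 5%N],
      nreal a = 3%N -> discr5 a < 0 & nreal a != 3%N -> 0 < discr5 a].
Proof.
move=> a_conj a_inj.
have [P P_pos] := prod_diffprod_real a_conj a_inj; rewrite -discr5_diffprod => DE.
have cases : [\/ nreal a = 1%N, nreal a = 3%N | nreal a = 5%N].
  have := odd_card_real a_conj a_inj; have := max_card [pred i | a i \is Num.real].
  rewrite -/(nreal a) card_ord.
  by case: (nreal a) => [|[|[|[|[|[|k]]]]]] //= _ _; constructor.
split => // [three | ne3].
  by rewrite DE pmulr_llt0 // real_diffprod3.
case: cases => [one | three | five]; last 2 first.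
- by rewrite three in ne3.
- exact/discr_real_gt0/nreal_eq5.
by rewrite DE real_diffprod1 // mul1r.
Qed.

Lemma L_real (R : numDomainType) (p q r s t : R) :
  p \is Num.real -> q \is Num.real -> r \is Num.real ->
  s \is Num.real -> t \is Num.real ->
  [/\ L3 p q \is Num.real, L2 p q r s \is Num.real & L1 p q r s t \is Num.real].
Proof.
move=> rp rq rr rs rt; rewrite /L3 /L2 /L1.
split; repeat first [assumption | apply: rpred_nat | apply: rpredB | apply: rpredN
  | apply: rpredD | apply: rpredM | apply: rpredX | by rewrite rpredN rpred_nat].
Qed.

Lemma not_all_gt0 (R : numDomainType) (x y z : R) :
  x \is Num.real -> y \is Num.real -> z \is Num.real ->
  ~ [/\ 0 < x, 0 < y & 0 < z] <-> (x <= 0 \/ y <= 0 \/ z <= 0).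
Proof.
move=> rx ry rz; rewrite !real_leNgt ?rpred0 //.
split => [not_pos | nonpos [x_pos y_pos z_pos]]; last by case: nonpos => [|[|]] /negP.
have [x_pos|] := boolP (0 < x); last by left.
have [y_pos|] := boolP (0 < y); last by right; left.
have [z_pos|] := boolP (0 < z); last by right; right.
by case: not_pos.
Qed.

Lemma real_roots_iff_minors (C : numClosedFieldType) (p q r s t : C) (a : 'I_5 -> C) :
  p \is Num.real -> q \is Num.real -> r \is Num.real ->
  s \is Num.real -> t \is Num.real ->
  quintic p q r s t = \prod_(i < 5) ('X - (a i)%:P) -> 0 < discr5 a ->
  (forall i, a i \is Num.real) <-> [/\ 0 < L3 p q, 0 < L2 p q r s & 0 < L1 p q r s t].
Proof.
move=> rp rq rr rs rt fE D_pos.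
have a_inj : injective a by apply/discr5_neq0; rewrite lt0r_neq0.
have [m1 m2 m3 m4] := minors_quintic fE.
have H_real i j : hankel a i j \is Num.real by apply: (psum_real rp rq rr rs rt fE).
have H_sym i j : hankel a i j = hankel a j i by rewrite /hankel addnC.
split => [a_real | [L3_pos L2_pos L1_pos] i].
  have minor_pos := pd_minors_pos (n := 5) isT H_real H_sym (hankel_form_pd a_inj a_real).
  have := minor_pos 2%N isT; have := minor_pos 3%N isT; have := minor_pos 4%N isT.
  by rewrite m2 m3 m4 pmulr_rgt0.
apply/negPn/negP => nonreal_i.
have [x x_real Q_neg] := hankel_form_neg rp rq rr rs rt fE a_inj nonreal_i.
suff : 0 <= qform 5 (hankel a) x by move/(lt_le_trans Q_neg); rewrite ltxx.
apply: sylvester_psd => //; case=> [|[|[|[|[|[|k]]]]]] // _.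
- by rewrite m1 ltr0n.
- by rewrite m2 mulr_gt0 ?ltr0n.
- by rewrite m3.
- by rewrite m4.
- by rewrite minor_hankel.
Qed.

Unset Implicit Arguments.

Theorem mainTheorem1 (C : numClosedFieldType) (p q r s t : C) (alpha : 'I_5 -> C) :
  p \is Num.real -> q \is Num.real -> r \is Num.real ->
  s \is Num.real -> t \is Num.real ->
  quintic p q r s t = \prod_(i < 5) ('X - (alpha i)%:P) ->
  [/\ (injective alpha /\ (forall i, alpha i \is Num.real))
        <-> [/\ 0 < L3 p q, 0 < L2 p q r s, 0 < L1 p q r s t & 0 < discr5 alpha],
      (injective alpha /\ nreal alpha = 3%N) <-> discr5 alpha < 0
    & (injective alpha /\ nreal alpha = 1%N)
        <-> 0 < discr5 alpha /\
            (L3 p q <= 0 \/ L2 p q r s <= 0 \/ L1 p q r s t <= 0)].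
Proof.
move=> rp rq rr rs rt fE.
have sign := discr5_sign (conj_root rp rq rr rs rt fE).
have hermite := real_roots_iff_minors rp rq rr rs rt fE.
have [rL3 rL2 rL1] := L_real rp rq rr rs rt.
have not_all_pos := not_all_gt0 rL3 rL2 rL1.
split; split.
- move=> [a_inj a_real]; have [_ _ D_pos] := sign a_inj.
  have D0 : 0 < discr5 alpha by apply: D_pos; rewrite (proj2 (nreal_eq5 alpha) a_real).
  by have [] := (hermite D0).1 a_real.
- move=> [L3_pos L2_pos L1_pos D0]; split; last exact/(hermite D0).
  by apply/discr5_neq0; rewrite lt0r_neq0.
- by move=> [a_inj three]; have [_ D_neg _] := sign a_inj; apply: D_neg.
- move=> D_neg; have a_inj : injective alpha by apply/discr5_neq0; rewrite ltr0_neq0.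
  split => //; have [_ _ D_pos] := sign a_inj.
  by apply/eqP; apply: contraTT D_neg => /D_pos D_gt0; rewrite lt_gtF.
- move=> [a_inj one]; have [_ _ D_pos] := sign a_inj.
  have D0 : 0 < discr5 alpha by apply: D_pos; rewrite one.
  split => //; apply/not_all_pos => L_pos.
  by have := proj2 (nreal_eq5 alpha) ((hermite D0).2 L_pos); rewrite one.
- move=> [D0 some_nonpos]; have a_inj : injective alpha by apply/discr5_neq0; rewrite lt0r_neq0.
  split => //; have [[one | three | five] D_neg _] := sign a_inj => //.
    by have := D_neg three; rewrite lt_gtF.
  by case: (proj2 not_all_pos some_nonpos); apply/(hermite D0)/nreal_eq5.
Qed.
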